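(* Let $\alpha$ be a nonzero real number. A regular curve in $\mathbb S^2$ with constant curvature, not passing through $N$, is an $\alpha$-stationary curve if and only if one of the following holds: (1) it is contained in a geodesic (great circle) passing through $N$ (this case occurs for every value of $\alpha$); (2) it is contained in a circle of radius $r\in(0,\pi)$ centered at $N$ and $\alpha=-r\cot(r)$.
   Context: $\mathbb S^2\subset\mathbb R^3$ is the unit sphere with the Euclidean inner product. It is parametrized by $\Psi(u,v)=(\sin u\cos v,\sin u\sin v,\cos u)$, and $N=(0,0,1)$. The spherical distance from $\Psi(u,v)$ to $N$ is $u\in[0,\pi]$. The circle of radius $r$ centered at $N$ is $\{\Psi(r,v)\}$. For a regular curve $\gamma(t)=\Psi(u(t),v(t))$, the unit normal is $\mathbf n=(\gamma'\times\gamma)/|\gamma'|$ and the curvature is $\kappa=\langle\gamma'',\mathbf n\rangle/|\gamma'|^2$. The energy is $$E_\alpha[\gamma]=\int_\gamma \mathsf d^\alpha ds=\int u^\alpha\sqrt{u'^2+\sin^2(u)v'^2}\,dt,$$ where $\mathsf d$ is the distance to $N$. An $\alpha$-stationary curve is a critical point of $E_\alpha$, i.e. $(u,v)$ satisfies its Euler–Lagrange equations. Throughout the paper, $\alpha\ne0$ and curves avoid $N$. *)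

From Stdlib Require Import Reals.
From Coquelicot Require Import Coquelicot.
Open Scope R_scope.

Definition vec3 := (R * R * R)%type.
Definition dot3 (x y : vec3) : R :=
  let '(x1, x2, x3) := x in let '(y1, y2, y3) := y in x1 * y1 + x2 * y2 + x3 * y3.
Definition cross3 (x y : vec3) : vec3 :=
  let '(x1, x2, x3) := x in let '(y1, y2, y3) := y in
  (x2 * y3 - x3 * y2, x3 * y1 - x1 * y3, x1 * y2 - x2 * y1).
Definition norm3 (x : vec3) : R := sqrt (dot3 x x).

Definition Npole : vec3 := (0, 0, 1).
Definition Psi (u v : R) : vec3 := (sin u * cos v, sin u * sin v, cos u).

Definition gamma (u v : R -> R) (t : R) : vec3 := Psi (u t) (v t).
Definition gamma1 (u v : R -> R) (t : R) : vec3 :=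
  (Derive (fun s => fst (fst (gamma u v s))) t,
   Derive (fun s => snd (fst (gamma u v s))) t,
   Derive (fun s => snd (gamma u v s)) t).
Definition gamma2 (u v : R -> R) (t : R) : vec3 :=
  (Derive (fun s => fst (fst (gamma1 u v s))) t,
   Derive (fun s => snd (fst (gamma1 u v s))) t,
   Derive (fun s => snd (gamma1 u v s)) t).

Definition unit_normal (u v : R -> R) (t : R) : vec3 :=
  let c := cross3 (gamma1 u v t) (gamma u v t) in
  let k := / norm3 (gamma1 u v t) in
  let '(c1, c2, c3) := c in (k * c1, k * c2, k * c3).
Definition curvature (u v : R -> R) (t : R) : R :=
  dot3 (gamma2 u v t) (unit_normal u v t) / (norm3 (gamma1 u v t)) ^ 2.

Definition Lag (alpha : R) (x y p q : R) : R :=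
  Rpower x alpha * sqrt (p ^ 2 + (sin x) ^ 2 * q ^ 2).

(* alpha-stationary: (u,v) satisfies the Euler-Lagrange equations of E_alpha on (a,b):
     d/dt (dL/du') = dL/du   and   d/dt (dL/dv') = dL/dv. *)
Definition stationary (alpha a b : R) (u v : R -> R) : Prop :=
  forall t, a < t < b ->
    is_derive (fun s => Derive (fun p => Lag alpha (u s) (v s) p (Derive v s)) (Derive u s)) t
              (Derive (fun x => Lag alpha x (v t) (Derive u t) (Derive v t)) (u t))
 /\ is_derive (fun s => Derive (fun q => Lag alpha (u s) (v s) (Derive u s) q) (Derive v s)) t
              (Derive (fun y => Lag alpha (u t) y (Derive u t) (Derive v t)) (v t)).

Definition on_great_circle_through_N (w : vec3) (x : vec3) : Prop :=
  w <> (0, 0, 0) /\ dot3 w Npole = 0 /\ norm3 x = 1 /\ dot3 w x = 0.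

Definition on_circle_N (r : R) (x : vec3) : Prop := exists v, x = Psi r v.

(* Both Euler-Lagrange equations of [E_alpha] are multiples of one quantity, the defect of the
   curvature equation [kappa = alpha <grad d, n> / d], where [<grad d, n> = sin u v' / |gamma'|].
   If [kappa = c] is constant, then either [c = 0], so [v' = 0] and the curve is a meridian, or the
   momentum of the cyclic coordinate [v] becomes [(c / alpha) u^(1 + alpha) sin u]; its
   conservation gives [u' h(u) = 0] with [h(x) = (1 + alpha) sin x + x cos x], and since
   [h + h'' = - 2 sin], differentiating twice along [u] forces [u' = 0]. On a parallel [u = r]
   the curvature equation reads [alpha = - r cot r]. Conversely, meridians and these parallels
   satisfy the curvature equation. *)

From Stdlib Require Import Reals Lra Nsatz.
From Coquelicot Require Import Coquelicot.
Open Scope R_scope.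

Lemma locally_open_interval (a b t : R) : a < t < b -> locally t (fun s => a < s < b).
Proof. exact (open_and _ _ (open_gt a) (open_lt b) t). Qed.

Lemma is_derive_eq (f : R -> R) (x l1 l2 : R) : is_derive f x l1 -> is_derive f x l2 -> l1 = l2.
Proof. intros H1 H2. apply is_derive_unique in H1, H2. congruence. Qed.

Lemma is_derive_locally_const (f : R -> R) (c t : R) :
  locally t (fun s => f s = c) -> is_derive f t 0.
Proof.
  intros Hf. apply (is_derive_ext_loc (fun _ => c)).
  - apply (filter_imp _ _ (fun s Hs => eq_sym Hs) Hf).
  - exact (is_derive_const (V := R_NormedModule) c t).
Qed.

Lemma is_derive_const_on (f : R -> R) (a b c t : R) :
  (forall s, a < s < b -> f s = c) -> a < t < b -> is_derive f t 0.
Proof.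
  intros Hf Ht. apply (is_derive_locally_const _ c).
  exact (filter_imp _ _ Hf (locally_open_interval a b t Ht)).
Qed.

Lemma is_derive_zero_const_on (f : R -> R) (a b : R) :
  (forall t, a < t < b -> is_derive f t 0) ->
  forall t1 t2, a < t1 < b -> a < t2 < b -> f t1 = f t2.
Proof.
  intros Hf t1 t2 H1 H2.
  assert (Hin : forall x, Rmin t1 t2 <= x <= Rmax t1 t2 -> a < x < b).
  { intros x Hx.
    pose proof (Rmin_glb_lt t1 t2 a (proj1 H1) (proj1 H2)).
    pose proof (Rmax_lub_lt t1 t2 b (proj2 H1) (proj2 H2)). lra. }
  destruct (MVT_gen f t1 t2 (fun _ => 0)) as [c [_ Hc]].
  - intros x Hx. apply Hf, Hin. lra.
  - intros x Hx. apply derivable_continuous_pt. exists 0.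
    apply is_derive_Reals, Hf, Hin, Hx.
  - lra.
Qed.

Definition twice_derivable_on (a b : R) (f : R -> R) : Prop :=
  forall t, a < t < b -> ex_derive f t /\ ex_derive (Derive f) t.

Lemma twice_derivable_on_smooth (a b : R) (f : R -> R) :
  (forall (n : nat) t, a < t < b -> ex_derive_n f n t) -> twice_derivable_on a b f.
Proof. intros Hf t Ht. exact (conj (Hf 1%nat t Ht) (Hf 2%nat t Ht)). Qed.

Lemma Derive_mul_comp_eq0_deriv (a b : R) (f F dF : R -> R) :
  twice_derivable_on a b f -> (forall x, is_derive F x (dF x)) ->
  (forall t, a < t < b -> Derive f t * F (f t) = 0) ->
  forall t, a < t < b -> Derive f t * dF (f t) = 0.
Proof.
  intros Hf HF H t Ht.
  destruct (Req_dec (Derive f t) 0) as [E|E]; [rewrite E; ring|].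
  destruct (Hf t Ht) as [Hf1 Hf2].
  assert (Hnear : locally t (fun s => a < s < b /\ Derive f s <> 0)).
  { apply filter_and; [now apply locally_open_interval|].
    apply (ex_derive_continuous (Derive f) t Hf2 (fun y => y <> 0)).
    now apply open_neq. }
  assert (HF0 : is_derive (fun s => F (f s)) t 0).
  { apply (is_derive_locally_const _ 0). revert Hnear. apply filter_imp.
    intros s [Hs Hfs]. specialize (H s Hs). apply Rmult_integral in H. tauto. }
  apply (is_derive_eq (fun s => F (f s)) t); [|exact HF0].
  apply (is_derive_comp F f). apply HF. now apply Derive_correct.
Qed.

Lemma Derive_eq0_of_Derive_mul_comp_eq0 (alpha a b : R) (f : R -> R) :
  twice_derivable_on a b f -> (forall t, a < t < b -> sin (f t) <> 0) ->
  (forall t, a < t < b -> Derive f t * ((1 + alpha) * sin (f t) + f t * cos (f t)) = 0) ->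
  forall t, a < t < b -> Derive f t = 0.
Proof.
  intros Hf Hsin H0.
  set (h := fun x => (1 + alpha) * sin x + x * cos x) in H0.
  set (dh := fun x => (2 + alpha) * cos x - x * sin x).
  set (d2h := fun x => - (3 + alpha) * sin x - x * cos x).
  assert (H1 : forall t, a < t < b -> Derive f t * dh (f t) = 0).
  { apply (Derive_mul_comp_eq0_deriv a b f h); [exact Hf | | exact H0].
    intros x. unfold h, dh. auto_derive; [exact I | ring]. }
  assert (H2 : forall t, a < t < b -> Derive f t * d2h (f t) = 0).
  { apply (Derive_mul_comp_eq0_deriv a b f dh); [exact Hf | | exact H1].
    intros x. unfold dh, d2h. auto_derive; [exact I | ring]. }
  intros t Ht.
  assert (E : Derive f t * sin (f t) = 0).
  { pose proof (H0 t Ht) as E0. pose proof (H2 t Ht) as E2. unfold h, d2h in *. lra. }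
  apply Rmult_integral in E. destruct E as [E|E]; [exact E|].
  exfalso. exact (Hsin t Ht E).
Qed.

Definition rotz (y : R) (X : vec3) : vec3 :=
  let '(x1, x2, x3) := X in (cos y * x1 - sin y * x2, sin y * x1 + cos y * x2, x3).

Lemma dot3_rotz (y : R) (X Y : vec3) : dot3 (rotz y X) (rotz y Y) = dot3 X Y.
Proof.
  destruct X as [[x1 x2] x3], Y as [[y1 y2] y3]; simpl.
  pose proof (sin2_cos2 y) as H; unfold Rsqr in H. nsatz.
Qed.

Lemma cross3_rotz (y : R) (X Y : vec3) : cross3 (rotz y X) (rotz y Y) = rotz y (cross3 X Y).
Proof.
  destruct X as [[x1 x2] x3], Y as [[y1 y2] y3]; simpl.
  pose proof (sin2_cos2 y) as H; unfold Rsqr in H. f_equal; [f_equal|]; nsatz.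
Qed.

Ltac fold_eta :=
  repeat match goal with
  | |- context [Derive (fun x => ?f x) ?t] => change (Derive (fun x => f x) t) with (Derive f t)
  end.

Definition sq_speed (u v : R -> R) (t : R) : R :=
  Derive u t ^ 2 + sin (u t) ^ 2 * Derive v t ^ 2.

Definition curvature_numerator (u v : R -> R) (t : R) : R :=
  sin (u t) * Derive v t * Derive (Derive u) t - sin (u t) ^ 2 * cos (u t) * Derive v t ^ 3
  - 2 * cos (u t) * Derive u t ^ 2 * Derive v t - sin (u t) * Derive u t * Derive (Derive v) t.

Lemma curvature_triple_product (u v : R -> R) (t : R) : norm3 (gamma1 u v t) <> 0 ->
  curvature u v t =
  dot3 (gamma2 u v t) (cross3 (gamma1 u v t) (gamma u v t)) / norm3 (gamma1 u v t) ^ 3.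
Proof.
  unfold curvature, unit_normal.
  destruct (cross3 (gamma1 u v t) (gamma u v t)) as [[c1 c2] c3], (gamma2 u v t) as [[x1 x2] x3].
  intros H. simpl. field. exact H.
Qed.

(* [gamma], [gamma'] and [gamma''] are the rotations by [v] of vectors in the meridian plane
   [y = 0] (see [gamma_rotz] below), where the triple product is computed. *)
Lemma triple_product_meridian_frame (s c p q p2 q2 : R) : s ^ 2 + c ^ 2 = 1 ->
  dot3 (- s * p ^ 2 + c * p2 - s * q ^ 2, 2 * c * p * q + s * q2, - (c * p ^ 2 + s * p2))
       (cross3 (c * p, s * q, - s * p) (s, 0, c)) =
  s * q * p2 - s ^ 2 * c * q ^ 3 - 2 * c * p ^ 2 * q - s * p * q2.
Proof.
  intros H. apply Rminus_diag_uniq.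
  transitivity ((s ^ 2 + c ^ 2 - 1) * (s * q * p2 - 2 * c * p ^ 2 * q - s * p * q2));
    [simpl; ring | rewrite H; ring].
Qed.

Lemma dot3_Psi (x y : R) : dot3 (Psi x y) (Psi x y) = 1.
Proof.
  unfold Psi, dot3. pose proof (sin2_cos2 x); pose proof (sin2_cos2 y). unfold Rsqr in *. nsatz.
Qed.

Section Coordinates.

Variables (a b : R) (u v : R -> R).
Hypotheses (Hu : twice_derivable_on a b u) (Hv : twice_derivable_on a b v).

Lemma gamma_rotz (t : R) : gamma u v t = rotz (v t) (sin (u t), 0, cos (u t)).
Proof. unfold gamma, Psi, rotz. f_equal. f_equal; ring. Qed.

Lemma gamma1_rotz (t : R) : a < t < b ->
  gamma1 u v t = rotz (v t)
    (cos (u t) * Derive u t, sin (u t) * Derive v t, - sin (u t) * Derive u t).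
Proof.
  intros Ht. destruct (Hu t Ht) as [Hu1 _], (Hv t Ht) as [Hv1 _].
  unfold gamma1, gamma, Psi, rotz; simpl.
  f_equal; [f_equal|]; apply is_derive_unique;
    (auto_derive; [repeat split; assumption | fold_eta; ring]).
Qed.

Lemma gamma2_rotz (t : R) : a < t < b ->
  gamma2 u v t = rotz (v t)
    (- sin (u t) * Derive u t ^ 2 + cos (u t) * Derive (Derive u) t - sin (u t) * Derive v t ^ 2,
     2 * cos (u t) * Derive u t * Derive v t + sin (u t) * Derive (Derive v) t,
     - (cos (u t) * Derive u t ^ 2 + sin (u t) * Derive (Derive u) t)).
Proof.
  intros Ht. destruct (Hu t Ht) as [Hu1 Hu2], (Hv t Ht) as [Hv1 Hv2].
  pose proof (filter_imp _ _ gamma1_rotz (locally_open_interval a b t Ht)) as Hnear.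
  unfold gamma2, rotz at 1.
  f_equal; [f_equal|]; apply is_derive_unique;
    (eapply is_derive_ext_loc;
      [eapply filter_imp; [|exact Hnear]; intros s Hs; rewrite Hs; simpl; reflexivity|]);
    (auto_derive; [repeat split; assumption | fold_eta; ring]).
Qed.

Lemma dot3_gamma1 (t : R) : a < t < b -> dot3 (gamma1 u v t) (gamma1 u v t) = sq_speed u v t.
Proof.
  intros Ht. rewrite gamma1_rotz, dot3_rotz by exact Ht. unfold sq_speed. simpl.
  pose proof (sin2_cos2 (u t)) as H; unfold Rsqr in H. nsatz.
Qed.

Lemma curvature_eq (t : R) : a < t < b -> 0 < sq_speed u v t ->
  curvature u v t = curvature_numerator u v t / sqrt (sq_speed u v t) ^ 3.
Proof.
  intros Ht HQ.
  assert (Hnorm : norm3 (gamma1 u v t) = sqrt (sq_speed u v t)).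
  { unfold norm3. now rewrite dot3_gamma1. }
  rewrite curvature_triple_product, Hnorm
    by (rewrite Hnorm; apply Rgt_not_eq, sqrt_lt_R0, HQ).
  rewrite gamma_rotz, gamma1_rotz, gamma2_rotz, cross3_rotz, dot3_rotz by exact Ht.
  rewrite triple_product_meridian_frame; [reflexivity|].
  pose proof (sin2_cos2 (u t)) as H; unfold Rsqr in H. lra.
Qed.

Lemma sq_speed_pos (t : R) : a < t < b -> gamma1 u v t <> (0, 0, 0) -> 0 < sq_speed u v t.
Proof.
  intros Ht Hreg. rewrite <- dot3_gamma1 by exact Ht.
  destruct (gamma1 u v t) as [[x1 x2] x3]. simpl.
  apply Rnot_le_lt. intros Hle. apply Hreg.
  assert (x1 = 0) by nra. assert (x2 = 0) by nra. assert (x3 = 0) by nra. now subst.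
Qed.

End Coordinates.

Lemma Derive_Lag_p (alpha x y p q : R) : 0 < p ^ 2 + sin x ^ 2 * q ^ 2 ->
  Derive (fun p' => Lag alpha x y p' q) p =
  Rpower x alpha * p / sqrt (p ^ 2 + sin x ^ 2 * q ^ 2).
Proof.
  intros H. apply is_derive_unique. unfold Lag. auto_derive; [exact H|].
  assert (sqrt (p ^ 2 + sin x ^ 2 * q ^ 2) <> 0) by now apply Rgt_not_eq, sqrt_lt_R0.
  simpl. field. assumption.
Qed.

Lemma Derive_Lag_q (alpha x y p q : R) : 0 < p ^ 2 + sin x ^ 2 * q ^ 2 ->
  Derive (fun q' => Lag alpha x y p q') q =
  Rpower x alpha * sin x ^ 2 * q / sqrt (p ^ 2 + sin x ^ 2 * q ^ 2).
Proof.
  intros H. apply is_derive_unique. unfold Lag. auto_derive; [exact H|].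
  assert (sqrt (p ^ 2 + sin x ^ 2 * q ^ 2) <> 0) by now apply Rgt_not_eq, sqrt_lt_R0.
  simpl. field. assumption.
Qed.

Lemma Derive_Lag_x (alpha x y p q : R) : 0 < x -> 0 < p ^ 2 + sin x ^ 2 * q ^ 2 ->
  Derive (fun x' => Lag alpha x' y p q) x =
  alpha * Rpower x alpha / x * sqrt (p ^ 2 + sin x ^ 2 * q ^ 2)
  + Rpower x alpha * sin x * cos x * q ^ 2 / sqrt (p ^ 2 + sin x ^ 2 * q ^ 2).
Proof.
  intros Hx H. apply is_derive_unique. unfold Lag, Rpower. auto_derive; [tauto|].
  assert (sqrt (p ^ 2 + sin x ^ 2 * q ^ 2) <> 0) by now apply Rgt_not_eq, sqrt_lt_R0.
  simpl. field. split; [assumption | lra].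
Qed.

Lemma Derive_Lag_y (alpha x y p q : R) : Derive (fun y' => Lag alpha x y' p q) y = 0.
Proof. unfold Lag. apply Derive_const. Qed.

(* [|gamma'|^3 (kappa - alpha sin u v' / (u |gamma'|))], by [curvature_eq]. *)
Definition curvature_defect (alpha : R) (u v : R -> R) (t : R) : R :=
  curvature_numerator u v t - alpha * sin (u t) * Derive v t * sq_speed u v t / u t.

(* Differentiates a momentum and names [x, p, q, p2, q2] the 2-jet [u, u', v', u'', v''] at [t],
   [A = x ^ alpha] and [W = |gamma'(t)|], with [HW : W ^ 2 = p ^ 2 + sin x ^ 2 * q ^ 2]. *)
Ltac expand_momentum_derivative u v t alpha :=
  unfold curvature_defect, curvature_numerator, Rpower;
  auto_derive; [repeat split; try assumption; apply Rgt_not_eq, sqrt_lt_R0; assumption|];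
  fold_eta;
  replace (Derive u t * (Derive u t * 1) + sin (u t) * (sin (u t) * 1) * (Derive v t * (Derive v t * 1)))
    with (sq_speed u v t) by (unfold sq_speed; ring);
  fold (sq_speed u v t);
  set (W := sqrt (sq_speed u v t));
  assert (HW : W ^ 2 = sq_speed u v t) by (apply pow2_sqrt, Rlt_le; assumption);
  assert (W <> 0) by (apply Rgt_not_eq, sqrt_lt_R0; assumption);
  unfold sq_speed in HW |- *;
  set (p := Derive u t) in *; set (q := Derive v t) in *;
  set (p2 := Derive (Derive u) t) in *; set (q2 := Derive (Derive v) t) in *;
  set (x := u t) in *; set (A := exp (alpha * ln x)).

Section StationaryCurves.

Variables (alpha a b : R) (u v : R -> R).
Hypotheses (Hu : twice_derivable_on a b u) (Hv : twice_derivable_on a b v).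
Hypothesis Hrange : forall t, a < t < b -> 0 < u t < PI.
Hypothesis Hspeed : forall t, a < t < b -> 0 < sq_speed u v t.

Lemma is_derive_momentum_u (t : R) : a < t < b ->
  is_derive (fun s => Derive (fun p => Lag alpha (u s) (v s) p (Derive v s)) (Derive u s)) t
    (Derive (fun x => Lag alpha x (v t) (Derive u t) (Derive v t)) (u t)
     + Rpower (u t) alpha * sin (u t) * Derive v t / sqrt (sq_speed u v t) ^ 3
       * curvature_defect alpha u v t).
Proof.
  intros Ht. destruct (Hu t Ht) as [Hu1 Hu2], (Hv t Ht) as [Hv1 Hv2].
  pose proof (proj1 (Hrange t Ht)) as Hx. pose proof (Hspeed t Ht) as HQ.
  eapply is_derive_ext_loc.
  { eapply filter_imp; [|exact (locally_open_interval a b t Ht)].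
    intros s Hs. symmetry. exact (Derive_Lag_p _ _ _ _ _ (Hspeed s Hs)). }
  rewrite Derive_Lag_x by assumption.
  expand_momentum_derivative u v t alpha.
  (* The two sides agree up to a multiple of [|gamma'|^2 - W ^ 2]. *)
  apply Rminus_diag_uniq.
  transitivity (A / W ^ 3 * (p ^ 2 + sin x ^ 2 * q ^ 2 - W ^ 2)
                * (alpha * (W ^ 2 + sin x ^ 2 * q ^ 2) / x - p2 + sin x * cos x * q ^ 2)).
  - field. split; [lra | assumption].
  - rewrite HW. ring.
Qed.

Lemma is_derive_momentum_v (t : R) : a < t < b ->
  is_derive (fun s => Derive (fun q => Lag alpha (u s) (v s) (Derive u s) q) (Derive v s)) t
    (- (Rpower (u t) alpha * sin (u t) * Derive u t / sqrt (sq_speed u v t) ^ 3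
        * curvature_defect alpha u v t)).
Proof.
  intros Ht. destruct (Hu t Ht) as [Hu1 Hu2], (Hv t Ht) as [Hv1 Hv2].
  pose proof (proj1 (Hrange t Ht)) as Hx. pose proof (Hspeed t Ht) as HQ.
  eapply is_derive_ext_loc.
  { eapply filter_imp; [|exact (locally_open_interval a b t Ht)].
    intros s Hs. symmetry. exact (Derive_Lag_q _ _ _ _ _ (Hspeed s Hs)). }
  expand_momentum_derivative u v t alpha.
  apply Rminus_diag_uniq.
  transitivity (A / W ^ 3 * (W ^ 2 - (p ^ 2 + sin x ^ 2 * q ^ 2))
                * (alpha * sin x ^ 2 * p * q / x + 2 * sin x * cos x * p * q + sin x ^ 2 * q2)).
  - field. split; [lra | assumption].
  - rewrite HW. ring.
Qed.

Lemma stationary_iff_curvature_defect_eq0 :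
  stationary alpha a b u v <-> forall t, a < t < b -> curvature_defect alpha u v t = 0.
Proof.
  unfold stationary. split.
  - intros H t Ht. destruct (H t Ht) as [E1 E2].
    rewrite Derive_Lag_y in E2.
    pose proof (is_derive_eq _ _ _ _ (is_derive_momentum_u t Ht) E1) as K1.
    pose proof (is_derive_eq _ _ _ _ (is_derive_momentum_v t Ht) E2) as K2.
    set (c := Rpower (u t) alpha * sin (u t) / sqrt (sq_speed u v t) ^ 3) in *.
    assert (Hc : c <> 0).
    { pose proof (Hspeed t Ht). pose proof (Hrange t Ht).
      apply Rgt_not_eq. unfold c, Rpower. apply Rdiv_lt_0_compat.
      - apply Rmult_lt_0_compat; [apply exp_pos | apply sin_gt_0; lra].
      - apply pow_lt, sqrt_lt_R0. assumption. }
    set (K := curvature_defect alpha u v t) in *.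
    assert (Hp : Derive u t * K = 0).
    { apply (Rmult_eq_reg_l c); [|exact Hc]. unfold c in *. lra. }
    assert (Hq : Derive v t * K = 0).
    { apply (Rmult_eq_reg_l c); [|exact Hc]. unfold c in *. lra. }
    apply (Rmult_eq_reg_l (sq_speed u v t)); [|apply Rgt_not_eq, Hspeed, Ht].
    transitivity (Derive u t * (Derive u t * K) + sin (u t) ^ 2 * Derive v t * (Derive v t * K));
      [unfold sq_speed; ring | rewrite Hp, Hq; ring].
  - intros HK t Ht. split.
    + pose proof (is_derive_momentum_u t Ht) as D.
      rewrite HK, Rmult_0_r, Rplus_0_r in D by exact Ht. exact D.
    + pose proof (is_derive_momentum_v t Ht) as D.
      rewrite HK, Rmult_0_r, Ropp_0 in D by exact Ht. rewrite Derive_Lag_y. exact D.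
Qed.

Lemma curvature_of_curvature_defect_eq0 (t : R) : a < t < b ->
  curvature_defect alpha u v t = 0 ->
  curvature u v t * (u t * sqrt (sq_speed u v t)) = alpha * sin (u t) * Derive v t.
Proof.
  intros Ht HK. pose proof (proj1 (Hrange t Ht)) as Hx. pose proof (Hspeed t Ht) as HQ.
  rewrite (curvature_eq a b u v Hu Hv t Ht HQ).
  unfold curvature_defect in HK.
  replace (curvature_numerator u v t)
    with (alpha * sin (u t) * Derive v t * sq_speed u v t / u t) by lra.
  set (W := sqrt (sq_speed u v t)).
  assert (HW : W ^ 2 = sq_speed u v t) by now apply pow2_sqrt, Rlt_le.
  assert (W <> 0) by now apply Rgt_not_eq, sqrt_lt_R0.
  rewrite <- HW. field. split; [lra | assumption].
Qed.

Lemma Derive_v_eq0_of_zero_curvature : alpha <> 0 ->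
  (forall t, a < t < b -> curvature_defect alpha u v t = 0) ->
  (forall t, a < t < b -> curvature u v t = 0) ->
  forall t, a < t < b -> Derive v t = 0.
Proof.
  intros Halpha HK Hflat t Ht.
  pose proof (curvature_of_curvature_defect_eq0 t Ht (HK t Ht)) as E.
  rewrite Hflat, Rmult_0_l in E by exact Ht.
  assert (Hs : alpha * sin (u t) <> 0).
  { apply Rmult_integral_contrapositive_currified; [exact Halpha|].
    apply Rgt_not_eq, sin_gt_0; apply Hrange, Ht. }
  apply (Rmult_eq_reg_l (alpha * sin (u t))); [lra | exact Hs].
Qed.

Lemma Derive_u_mul_eq0_of_constant_curvature (c : R) : alpha <> 0 -> c <> 0 ->
  (forall t, a < t < b -> curvature_defect alpha u v t = 0) ->
  (forall t, a < t < b -> curvature u v t = c) ->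
  forall t, a < t < b -> Derive u t * ((1 + alpha) * sin (u t) + u t * cos (u t)) = 0.
Proof.
  intros Halpha Hc HK Hcurv t Ht.
  assert (Hmomentum : forall s, a < s < b ->
    Derive (fun q => Lag alpha (u s) (v s) (Derive u s) q) (Derive v s)
    = c / alpha * (u s * exp (alpha * ln (u s)) * sin (u s))).
  { intros s Hs. pose proof (proj1 (Hrange s Hs)). pose proof (Hspeed s Hs).
    rewrite Derive_Lag_q by assumption. fold (sq_speed u v s).
    pose proof (curvature_of_curvature_defect_eq0 s Hs (HK s Hs)) as E.
    rewrite Hcurv in E by exact Hs.
    assert (sqrt (sq_speed u v s) <> 0) by now apply Rgt_not_eq, sqrt_lt_R0.
    unfold Rpower.
    transitivity (exp (alpha * ln (u s)) * sin (u s) * (alpha * sin (u s) * Derive v s)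
                  / alpha / sqrt (sq_speed u v s)); [field; auto|].
    rewrite <- E. field. auto. }
  assert (D0 : is_derive (fun s => c / alpha * (u s * exp (alpha * ln (u s)) * sin (u s))) t 0).
  { eapply is_derive_ext_loc.
    { eapply filter_imp; [|exact (locally_open_interval a b t Ht)]. exact Hmomentum. }
    pose proof (is_derive_momentum_v t Ht) as D.
    rewrite HK, Rmult_0_r, Ropp_0 in D by exact Ht. exact D. }
  assert (D1 : is_derive (fun s => c / alpha * (u s * exp (alpha * ln (u s)) * sin (u s))) t
    (c / alpha * exp (alpha * ln (u t))
     * (Derive u t * ((1 + alpha) * sin (u t) + u t * cos (u t))))).
  { pose proof (proj1 (Hrange t Ht)). destruct (Hu t Ht) as [Hu1 _].
    auto_derive; [repeat split; assumption|]. fold_eta. field. lra. }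
  pose proof (is_derive_eq _ _ _ _ D1 D0) as E.
  apply Rmult_integral in E. destruct E as [E|E]; [|exact E].
  exfalso. apply Rmult_integral in E. destruct E as [E|E].
  - revert E. unfold Rdiv. apply Rmult_integral_contrapositive_currified; [exact Hc|].
    now apply Rinv_neq_0_compat.
  - pose proof (exp_pos (alpha * ln (u t))). lra.
Qed.

Lemma great_circle_of_Derive_v_eq0 : a < b -> (forall t, a < t < b -> Derive v t = 0) ->
  exists w, forall t, a < t < b -> on_great_circle_through_N w (gamma u v t).
Proof.
  intros Hab Hv1.
  set (m := (a + b) / 2). assert (Hm : a < m < b) by (unfold m; lra).
  assert (Hconst : forall t, a < t < b -> v t = v m).
  { intros t Ht. apply (is_derive_zero_const_on v a b); [|exact Ht | exact Hm].
    intros s Hs. rewrite <- (Hv1 s Hs). apply Derive_correct, Hv, Hs. }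
  exists (- sin (v m), cos (v m), 0). intros t Ht. repeat split.
  - intros E. injection E as E1 E2. pose proof (sin2_cos2 (v m)). unfold Rsqr in *. nra.
  - unfold dot3, Npole. ring.
  - unfold norm3, gamma. rewrite dot3_Psi. apply sqrt_1.
  - unfold gamma, Psi, dot3. rewrite (Hconst t Ht). ring.
Qed.

Lemma Derive_v_eq0_of_great_circle (w : vec3) :
  (forall t, a < t < b -> on_great_circle_through_N w (gamma u v t)) ->
  forall t, a < t < b -> Derive v t = 0.
Proof.
  destruct w as [[w1 w2] w3]. intros Hw t Ht.
  destruct (Hw t Ht) as [Hw0 [HwN _]]. unfold dot3, Npole in HwN.
  assert (Hplane : forall s, a < s < b -> w1 * cos (v s) + w2 * sin (v s) = 0).
  { intros s Hs. destruct (Hw s Hs) as [_ [_ [_ D]]]. unfold dot3, gamma, Psi in D.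
    pose proof (sin_gt_0 (u s) (proj1 (Hrange s Hs)) (proj2 (Hrange s Hs))).
    apply (Rmult_eq_reg_l (sin (u s))); [nra | lra]. }
  assert (D : is_derive (fun s => w1 * cos (v s) + w2 * sin (v s)) t
                ((- w1 * sin (v t) + w2 * cos (v t)) * Derive v t)).
  { destruct (Hv t Ht) as [Hv1 _]. auto_derive; [repeat split; exact Hv1|]. fold_eta. ring. }
  pose proof (is_derive_eq _ _ _ _ D (is_derive_const_on _ a b 0 t Hplane Ht)) as E.
  apply Rmult_integral in E. destruct E as [E|E]; [|exact E].
  exfalso. apply Hw0. pose proof (Hplane t Ht). pose proof (sin2_cos2 (v t)). unfold Rsqr in *.
  assert (w1 = 0) by nra. assert (w2 = 0) by nra. assert (w3 = 0) by lra. now subst.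
Qed.

Lemma curvature_defect_eq0_of_Derive_v_eq0 : (forall t, a < t < b -> Derive v t = 0) ->
  forall t, a < t < b -> curvature_defect alpha u v t = 0.
Proof.
  intros Hv1 t Ht.
  assert (Hv2 : Derive (Derive v) t = 0)
    by exact (is_derive_unique _ _ _ (is_derive_const_on _ a b 0 t Hv1 Ht)).
  unfold curvature_defect, curvature_numerator. rewrite Hv1, Hv2 by exact Ht.
  unfold Rdiv. ring.
Qed.

Lemma curvature_defect_parallel (r : R) : (forall t, a < t < b -> u t = r) ->
  forall t, a < t < b ->
  curvature_defect alpha u v t = - (sin r ^ 3 * Derive v t ^ 3) * (cos r / sin r + alpha / r).
Proof.
  intros Hr t Ht.
  assert (Hu1 : forall s, a < s < b -> Derive u s = 0)
    by (intros s Hs; exact (is_derive_unique _ _ _ (is_derive_const_on _ a b r s Hr Hs))).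
  assert (Hu2 : Derive (Derive u) t = 0)
    by exact (is_derive_unique _ _ _ (is_derive_const_on _ a b 0 t Hu1 Ht)).
  pose proof (Hrange t Ht) as Hx. rewrite Hr in Hx by exact Ht.
  pose proof (sin_gt_0 r (proj1 Hx) (proj2 Hx)).
  unfold curvature_defect, curvature_numerator, sq_speed.
  rewrite Hr, Hu1, Hu2 by exact Ht. field. lra.
Qed.

Lemma parallel_of_Derive_u_eq0 : a < b -> (forall t, a < t < b -> Derive u t = 0) ->
  (forall t, a < t < b -> curvature_defect alpha u v t = 0) ->
  exists r, 0 < r < PI /\ (forall t, a < t < b -> on_circle_N r (gamma u v t))
            /\ alpha = - r * (cos r / sin r).
Proof.
  intros Hab Hu1 HK.
  set (m := (a + b) / 2). assert (Hm : a < m < b) by (unfold m; lra).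
  assert (Hconst : forall t, a < t < b -> u t = u m).
  { intros t Ht. apply (is_derive_zero_const_on u a b); [|exact Ht | exact Hm].
    intros s Hs. rewrite <- (Hu1 s Hs). apply Derive_correct, Hu, Hs. }
  pose proof (Hrange m Hm) as Hr.
  exists (u m). split; [exact Hr | split].
  - intros t Ht. exists (v t). unfold gamma. now rewrite (Hconst t Ht).
  - pose proof (sin_gt_0 (u m) (proj1 Hr) (proj2 Hr)).
    assert (Hq : Derive v m <> 0).
    { intros Hq. pose proof (Hspeed m Hm) as HQ. unfold sq_speed in HQ.
      rewrite Hu1, Hq in HQ by exact Hm. lra. }
    pose proof (HK m Hm) as E. rewrite (curvature_defect_parallel (u m) Hconst m Hm) in E.
    apply Rmult_integral in E. destruct E as [E|E].
    + exfalso. apply (Rmult_integral_contrapositive_currified (sin (u m) ^ 3) (Derive v m ^ 3)).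
      * apply pow_nonzero. lra.
      * now apply pow_nonzero.
      * lra.
    + assert (u m <> 0) by lra.
      replace alpha with (u m * (alpha / u m)) by (field; assumption).
      replace (alpha / u m) with (- (cos (u m) / sin (u m))) by lra. ring.
Qed.

Lemma u_eq_of_on_circle_N (r : R) : 0 < r < PI ->
  (forall t, a < t < b -> on_circle_N r (gamma u v t)) -> forall t, a < t < b -> u t = r.
Proof.
  intros Hr Hcirc t Ht. destruct (Hcirc t Ht) as [y E].
  unfold gamma, Psi in E. injection E as _ _ Ecos.
  pose proof (Hrange t Ht). apply cos_inj; lra.
Qed.

End StationaryCurves.

Theorem proposition3p3 (alpha : R) (Halpha : alpha <> 0)
  (a b : R) (Hab : a < b) (u v : R -> R)
  (* smooth coordinate functions on the interval (a,b) *)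
  (Hsmooth : forall (n : nat) (t : R), a < t < b -> ex_derive_n u n t /\ ex_derive_n v n t)
  (* the curve avoids N (u > 0) and stays in the chart of Psi (u < pi) *)
  (Hu : forall t, a < t < b -> 0 < u t < PI)
  (* regular *)
  (Hreg : forall t, a < t < b -> gamma1 u v t <> (0, 0, 0))
  (* constant curvature *)
  (Hconst : exists c, forall t, a < t < b -> curvature u v t = c) :
  stationary alpha a b u v <->
  ((exists w : vec3, forall t, a < t < b -> on_great_circle_through_N w (gamma u v t))
   \/ (exists r, 0 < r < PI /\ (forall t, a < t < b -> on_circle_N r (gamma u v t))
                 /\ alpha = - r * (cos r / sin r))).
Proof.
  pose proof (twice_derivable_on_smooth a b u (fun n t Ht => proj1 (Hsmooth n t Ht))) as Hu2.
  pose proof (twice_derivable_on_smooth a b v (fun n t Ht => proj2 (Hsmooth n t Ht))) as Hv2.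
  assert (Hspeed : forall t, a < t < b -> 0 < sq_speed u v t)
    by (intros t Ht; exact (sq_speed_pos a b u v Hu2 Hv2 t Ht (Hreg t Ht))).
  rewrite (stationary_iff_curvature_defect_eq0 alpha a b u v Hu2 Hv2 Hu Hspeed).
  split.
  - intros HK. destruct Hconst as [c Hc]. destruct (Req_dec c 0) as [-> | Hc0].
    + left. apply (great_circle_of_Derive_v_eq0 a b u v Hv2 Hab).
      apply (Derive_v_eq0_of_zero_curvature alpha a b u v); assumption.
    + right. apply (parallel_of_Derive_u_eq0 alpha a b u v); try assumption.
      apply (Derive_eq0_of_Derive_mul_comp_eq0 alpha a b u Hu2).
      * intros t Ht. apply Rgt_not_eq, sin_gt_0; apply Hu, Ht.
      * exact (Derive_u_mul_eq0_of_constant_curvature alpha a b u v Hu2 Hv2 Hu Hspeed c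
          Halpha Hc0 HK Hc).
  - intros [[w Hw] | [r [Hr [Hcirc Ha]]]].
    + apply curvature_defect_eq0_of_Derive_v_eq0.
      exact (Derive_v_eq0_of_great_circle a b u v Hv2 Hu w Hw).
    + intros t Ht. pose proof (sin_gt_0 r (proj1 Hr) (proj2 Hr)).
      pose proof (u_eq_of_on_circle_N a b u v Hu r Hr Hcirc) as Hur.
      rewrite (curvature_defect_parallel alpha a b u v Hu r Hur t Ht), Ha.
      field. lra.
Qed.
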